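(* Let $n\geq 2$, $\mu>0$, $1<\lambda\leq n$, and $h(x,y)=(\mu x,\lambda y)$. Then there exists an orientation preserving homeomorphism $g:\mathbb{R}\to\mathbb{R}$ with $g\neq\mathrm{id}$ and $\sup_{y}|g(y)-y|<\infty$ such that $f(x,y)=(x,g(y))$ satisfies $hfh^{-1}=f^n$ (in particular $f$ is a nontrivial orientation preserving homeomorphism of $\mathbb{R}^2$ with bounded displacement). For $\lambda=n$ one may take $g(y)=y+1$. *)

From Stdlib Require Import Reals.
Open Scope R_scope.

Definition homeomorphism_R (g : R -> R) : Prop :=
  continuity g /\
  exists ginv : R -> R, continuity ginv /\
    (forall y, ginv (g y) = y) /\ (forall y, g (ginv y) = y).

Definition orientation_preserving_R (g : R -> R) : Prop :=
  forall a b, a < b -> g a < g b.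

Definition bounded_displacement_R (g : R -> R) : Prop :=
  exists M : R, forall y, Rabs (g y - y) <= M.

Definition hmap (mu lam : R) (p : R * R) : R * R := (mu * fst p, lam * snd p).
Definition hinv (mu lam : R) (p : R * R) : R * R := (fst p / mu, snd p / lam).

Definition fmap (g : R -> R) (p : R * R) : R * R := (fst p, g (snd p)).

Definition iterf (n : nat) (f : R * R -> R * R) : R * R -> R * R :=
  fun p => Nat.iter n f p.

Definition conj_relation (mu lam : R) (n : nat) (g : R -> R) : Prop :=
  forall p : R * R, hmap mu lam (fmap g (hinv mu lam p)) = iterf n (fmap g) p.

From Stdlib Require Import Reals Lra.
Open Scope R_scope.

(* With a = log_lam n >= 1, the odd power map phi(y) = sign(y) |y|^a satisfies
   phi(lam y) = n phi(y), so g = phi^-1 (phi(y) + 1), the unit translation read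
   in the coordinate phi, satisfies lam g(y / lam) = phi^-1 (phi(y) + n) = g^n(y).
   Its displacement is bounded because phi^-1 is the odd power with exponent
   1/a <= 1, whose increments over unit intervals are at most 2 by the
   superadditivity u^a + 1 <= (u + 1)^a.  For lam = n one takes phi = id. *)

(* [Rpower 0 a] is 1, since [ln 0 = 0]; hence the explicit case at 0. *)
Definition ppow (a y : R) : R := if Rlt_dec 0 y then Rpower y a else 0.

Definition spow (a y : R) : R := if Rle_dec 0 y then ppow a y else - ppow a (- y).

Lemma Rpower_pos x a : 0 < Rpower x a.
Proof. apply exp_pos. Qed.

Lemma Rpower_base_1 a : Rpower 1 a = 1.
Proof. unfold Rpower. now rewrite ln_1, Rmult_0_r, exp_0. Qed.

Lemma ppow_pos a y : 0 < y -> ppow a y = Rpower y a.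
Proof. intro Hy. unfold ppow. destruct (Rlt_dec 0 y); [reflexivity | lra]. Qed.

Lemma ppow_0 a : ppow a 0 = 0.
Proof. unfold ppow. destruct (Rlt_dec 0 0); [lra | reflexivity]. Qed.

Lemma ppow_ge0 a y : 0 <= ppow a y.
Proof. unfold ppow. destruct (Rlt_dec 0 y); [left; apply Rpower_pos | lra]. Qed.

Lemma ppow_lt a x y : 0 < a -> 0 <= x -> x < y -> ppow a x < ppow a y.
Proof.
  intros Ha [Hx | <-] Hxy; rewrite (ppow_pos a y) by lra.
  - rewrite ppow_pos by lra. apply Rlt_Rpower_l; lra.
  - rewrite ppow_0. apply Rpower_pos.
Qed.

Lemma ppowK a y : 0 < a -> 0 <= y -> ppow (/ a) (ppow a y) = y.
Proof.
  intros Ha [Hy | <-]; [| now rewrite !ppow_0].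
  rewrite (ppow_pos a y), ppow_pos, Rpower_mult by (apply Rpower_pos || lra).
  rewrite Rinv_r, Rpower_1 by lra. reflexivity.
Qed.

Lemma ppowM a x y : 0 < x -> 0 <= y -> ppow a (x * y) = Rpower x a * ppow a y.
Proof.
  intros Hx [Hy | <-]; [| now rewrite Rmult_0_r, !ppow_0, Rmult_0_r].
  rewrite !ppow_pos by nra. now rewrite Rpower_mult_distr.
Qed.

Lemma ppow_le1 a w : 0 < a -> 0 <= w -> w <= 1 -> ppow a w <= 1.
Proof.
  intros Ha Hw [Hw1 | ->].
  - pose proof (ppow_lt a w 1 Ha Hw Hw1) as H.
    rewrite (ppow_pos a 1), Rpower_base_1 in H by lra. lra.
  - rewrite ppow_pos, Rpower_base_1 by lra. lra.
Qed.

Lemma ppow_superadditive a u : 1 <= a -> 0 <= u -> ppow a u + 1 <= ppow a (u + 1).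
Proof.
  intros Ha [Hu | <-].
  2: rewrite ppow_0, Rplus_0_l, ppow_pos, Rpower_base_1 by lra; lra.
  rewrite !ppow_pos by lra.
  (* x^a = x * x^(a-1), where x^(a-1) is nondecreasing in x and at least 1 for x >= 1 *)
  assert (Hsplit : forall x, 0 < x -> Rpower x a = x * Rpower x (a - 1)).
  { intros x Hx. rewrite <- (Rpower_1 x) at 2 by exact Hx.
    rewrite <- Rpower_plus. f_equal. ring. }
  rewrite !Hsplit by lra.
  assert (Hmono : Rpower u (a - 1) <= Rpower (u + 1) (a - 1))
    by (apply Rle_Rpower_l; lra).
  assert (Hone : 1 <= Rpower (u + 1) (a - 1)).
  { apply Rle_trans with (Rpower (u + 1) 0); [rewrite Rpower_O |]; try lra.
    apply Rle_Rpower; lra. }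
  nra.
Qed.

Lemma ppow_step_le1 b w : 0 < b <= 1 -> 0 <= w -> ppow b (w + 1) - ppow b w <= 1.
Proof.
  intros Hb Hw.
  assert (Ha : 1 <= / b) by (rewrite <- Rinv_1; apply Rinv_le_contravar; lra).
  pose proof (ppow_ge0 b w) as Hu.
  pose proof (ppow_superadditive (/ b) _ Ha Hu) as Hsup.
  rewrite ppowK in Hsup by lra.
  apply Rnot_lt_le; intro Hgap.
  pose proof (ppow_lt (/ b) (ppow b w + 1) (ppow b (w + 1))
                ltac:(lra) ltac:(lra) ltac:(lra)) as Hlt.
  rewrite ppowK in Hlt by lra. lra.
Qed.

Lemma spow_lt a x y : 0 < a -> x < y -> spow a x < spow a y.
Proof.
  intros Ha Hxy. unfold spow.
  pose proof (ppow_lt a 0 (- x) Ha (Rle_refl 0)) as Hneg. rewrite ppow_0 in Hneg.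
  destruct (Rle_dec 0 x), (Rle_dec 0 y).
  - apply ppow_lt; lra.
  - lra.
  - pose proof (ppow_ge0 a y). pose proof (Hneg ltac:(lra)). lra.
  - pose proof (ppow_lt a (- y) (- x) Ha ltac:(lra) ltac:(lra)). lra.
Qed.

Lemma spowK a y : 0 < a -> spow (/ a) (spow a y) = y.
Proof.
  intro Ha. unfold spow at 2.
  destruct (Rle_dec 0 y) as [Hy | Hy].
  - unfold spow. destruct (Rle_dec 0 (ppow a y)) as [_ | H].
    + now apply ppowK.
    + pose proof (ppow_ge0 a y). lra.
  - pose proof (ppow_lt a 0 (- y) Ha (Rle_refl 0) ltac:(lra)) as Hpos.
    rewrite ppow_0 in Hpos. unfold spow.
    destruct (Rle_dec 0 (- ppow a (- y))) as [H | _]; [lra |].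
    rewrite Ropp_involutive, ppowK by lra. lra.
Qed.

Lemma spowM a x y : 0 < x -> spow a (x * y) = Rpower x a * spow a y.
Proof.
  intro Hx. unfold spow.
  destruct (Rle_dec 0 (x * y)), (Rle_dec 0 y).
  - now apply ppowM.
  - exfalso. nra.
  - assert (y = 0) as -> by nra. lra.
  - replace (- (x * y)) with (x * - y) by ring. rewrite ppowM by lra. ring.
Qed.

Lemma spow_step_le2 b z : 0 < b <= 1 -> Rabs (spow b (z + 1) - spow b z) <= 2.
Proof.
  intro Hb.
  pose proof (spow_lt b z (z + 1) ltac:(lra) ltac:(lra)) as Hlt.
  rewrite Rabs_right by lra.
  unfold spow. destruct (Rle_dec 0 (z + 1)), (Rle_dec 0 z).
  - pose proof (ppow_step_le1 b z Hb ltac:(lra)). lra.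
  - pose proof (ppow_le1 b (z + 1) ltac:(lra) ltac:(lra) ltac:(lra)).
    pose proof (ppow_le1 b (- z) ltac:(lra) ltac:(lra) ltac:(lra)). lra.
  - lra.
  - pose proof (ppow_step_le1 b (- z - 1) Hb ltac:(lra)) as Hstep.
    replace (- z - 1 + 1) with (- z) in Hstep by ring.
    replace (- (z + 1)) with (- z - 1) by ring. lra.
Qed.

Lemma increasing_surjective_continuous (F : R -> R) :
  (forall x y, x < y -> F x < F y) -> (forall z, exists x, F x = z) -> continuity F.
Proof.
  intros Hincr Hsurj y eps Heps.
  destruct (Hsurj (F y - eps)) as [l Hl], (Hsurj (F y + eps)) as [r Hr].
  assert (Hly : l < y).
  { destruct (Rtotal_order l y) as [H | [-> | H]]; [exact H | lra |].
    apply Hincr in H. lra. }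
  assert (Hyr : y < r).
  { destruct (Rtotal_order y r) as [H | [<- | H]]; [exact H | lra |].
    apply Hincr in H. lra. }
  exists (Rmin (y - l) (r - y)). split; [apply Rmin_pos; lra |].
  intros z [_ Hz]. simpl in *. unfold R_dist in *.
  pose proof (Rmin_l (y - l) (r - y)). pose proof (Rmin_r (y - l) (r - y)).
  destruct (Rabs_def2 (z - y) (Rmin (y - l) (r - y)) Hz).
  assert (Hlz : F l < F z) by (apply Hincr; lra).
  assert (Hzr : F z < F r) by (apply Hincr; lra).
  apply Rabs_def1; lra.
Qed.

Lemma homeomorphism_of_increasing_inverses (g ginv : R -> R) :
  (forall x y, x < y -> g x < g y) -> (forall x y, x < y -> ginv x < ginv y) ->
  (forall y, ginv (g y) = y) -> (forall y, g (ginv y) = y) -> homeomorphism_R g.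
Proof.
  intros Hg Hginv gK ginvK. split.
  - apply increasing_surjective_continuous; [exact Hg |].
    intro z. exists (ginv z). apply ginvK.
  - exists ginv. split; [| split; assumption].
    apply increasing_surjective_continuous; [exact Hginv |].
    intro z. exists (g z). apply gK.
Qed.

Lemma iter_fmap k g p : Nat.iter k (fmap g) p = (fst p, Nat.iter k g (snd p)).
Proof. induction k as [| k IH]; simpl; [now destruct p | now rewrite IH]. Qed.

Section ConjugatedTranslation.

Variables (phi psi : R -> R).
Hypothesis phi_increasing : forall x y, x < y -> phi x < phi y.
Hypothesis psi_increasing : forall x y, x < y -> psi x < psi y.
Hypothesis phiK : forall y, psi (phi y) = y.
Hypothesis psiK : forall z, phi (psi z) = z.

Definition conj_shift (y : R) : R := psi (phi y + 1).

Lemma conj_shift_increasing : orientation_preserving_R conj_shift.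
Proof. intros x y Hxy. apply psi_increasing, Rplus_lt_compat_r, phi_increasing, Hxy. Qed.

Lemma conj_shift_homeomorphism : homeomorphism_R conj_shift.
Proof.
  apply (homeomorphism_of_increasing_inverses _ (fun y => psi (phi y - 1))).
  - exact conj_shift_increasing.
  - intros x y Hxy. apply psi_increasing, Rplus_lt_compat_r, phi_increasing, Hxy.
  - intro y. unfold conj_shift. rewrite psiK. replace (phi y + 1 - 1) with (phi y) by ring. apply phiK.
  - intro y. unfold conj_shift. rewrite psiK. replace (phi y - 1 + 1) with (phi y) by ring. apply phiK.
Qed.

Lemma conj_shift_fixpoint_free y : conj_shift y <> y.
Proof.
  intro Hfix. apply (f_equal phi) in Hfix. unfold conj_shift in Hfix.
  rewrite psiK in Hfix. lra.
Qed.

Lemma conj_shift_iter k y : Nat.iter k conj_shift y = psi (phi y + INR k).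
Proof.
  induction k as [| k IH]; simpl Nat.iter.
  - now rewrite Rplus_0_r, phiK.
  - rewrite IH. unfold conj_shift. rewrite psiK, S_INR, Rplus_assoc. reflexivity.
Qed.

Lemma conj_shift_bounded_displacement M :
  (forall z, Rabs (psi (z + 1) - psi z) <= M) -> bounded_displacement_R conj_shift.
Proof.
  intro Hstep. exists M. intro y. unfold conj_shift.
  rewrite <- (phiK y) at 2. apply Hstep.
Qed.

Lemma conj_shift_conj_relation mu lam n :
  0 < mu -> 0 < lam -> (forall y, phi (lam * y) = INR n * phi y) ->
  conj_relation mu lam n conj_shift.
Proof.
  intros Hmu Hlam Hhom [x y]. unfold iterf. rewrite iter_fmap, conj_shift_iter.
  unfold hmap, hinv, fmap. simpl. f_equal; [field; lra |].
  assert (Hhom_inv : forall w, lam * psi w = psi (INR n * w))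
    by (intro w; now rewrite <- (phiK (lam * psi w)), Hhom, psiK).
  replace (phi y) with (INR n * phi (y / lam))
    by (rewrite <- Hhom; f_equal; field; lra).
  unfold conj_shift. rewrite Hhom_inv. f_equal. ring.
Qed.

Lemma conj_shift_spec mu lam n M :
  0 < mu -> 0 < lam -> (forall y, phi (lam * y) = INR n * phi y) ->
  (forall z, Rabs (psi (z + 1) - psi z) <= M) ->
  homeomorphism_R conj_shift /\ orientation_preserving_R conj_shift /\
  (exists y, conj_shift y <> y) /\ bounded_displacement_R conj_shift /\
  conj_relation mu lam n conj_shift.
Proof.
  intros Hmu Hlam Hhom Hstep.
  split; [exact conj_shift_homeomorphism |].
  split; [exact conj_shift_increasing |].
  split; [exists 0; apply conj_shift_fixpoint_free |].
  split; [exact (conj_shift_bounded_displacement M Hstep) |].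
  exact (conj_shift_conj_relation mu lam n Hmu Hlam Hhom).
Qed.

End ConjugatedTranslation.

Lemma Rlog_ge1 lam m : 1 < lam -> lam <= m -> 1 <= Rlog lam m.
Proof.
  intros Hlam Hm. unfold Rlog.
  assert (Hln : 0 < ln lam) by (rewrite <- ln_1; apply ln_increasing; lra).
  apply (Rmult_le_reg_r (ln lam)); [exact Hln |].
  unfold Rdiv. rewrite Rmult_assoc, Rinv_l, Rmult_1_r, Rmult_1_l by lra.
  destruct Hm as [Hm | ->]; [left; apply ln_increasing |]; lra.
Qed.

Theorem mainTheorem14 (n : nat) (mu lam : R) :
  (2 <= n)%nat -> 0 < mu -> 1 < lam -> lam <= INR n ->
  (exists g : R -> R,
     homeomorphism_R g /\ orientation_preserving_R g /\
     (exists y, g y <> y) /\ bounded_displacement_R g /\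
     conj_relation mu lam n g)
  /\
  (lam = INR n ->
     let g := fun y : R => y + 1 in
     homeomorphism_R g /\ orientation_preserving_R g /\
     (exists y, g y <> y) /\ bounded_displacement_R g /\
     conj_relation mu lam n g).
Proof.
  intros _ Hmu Hlam Hlam_n.
  split.
  - set (a := Rlog lam (INR n)).
    assert (Ha : 1 <= a) by (apply Rlog_ge1; lra).
    assert (Hb : 0 < / a <= 1).
    { split; [apply Rinv_0_lt_compat; lra |].
      rewrite <- Rinv_1. apply Rinv_le_contravar; lra. }
    assert (Hlam_a : Rpower lam a = INR n) by (apply Rpower_Rlog; lra).
    exists (conj_shift (spow a) (spow (/ a))).
    apply conj_shift_spec with (M := 2); try lra.
    + intros x y. apply spow_lt. lra.
    + intros x y. apply spow_lt. lra.
    + intro y. apply spowK. lra.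
    + intro z. rewrite <- (Rinv_inv a) at 1. apply spowK. lra.
    + intro y. now rewrite spowM, Hlam_a by lra.
    + intro z. now apply spow_step_le2.
  - intros Hlam_eq g.
    apply (conj_shift_spec (fun y => y) (fun y => y)) with (M := 1); try easy; try lra.
    + intro y. now rewrite Hlam_eq.
    + intro z. replace (z + 1 - z) with 1 by ring. rewrite Rabs_R1. lra.
Qed.
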